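(* Let $r\ge 0$ and let $\mathcal Y_r(\mathbf q,\dot{\mathbf q},\dots,\mathbf q^{(r)},\mathbf q^{(r+1)},t)$ be a smooth real-valued function. Let $\bar{\mathbf q}(\mathbf q,t)$ be a $C^\infty$ change of coordinates on $\mathbb R^\ell$ with $\det J_{\mathbf q}\bar{\mathbf q}\neq 0$, where $(J_{\mathbf q}\bar{\mathbf q})_{ij}=\partial\bar q_i/\partial q_j$. Let $\widetilde{\mathcal Y}_r(\bar{\mathbf q},\dot{\bar{\mathbf q}},\dots,\bar{\mathbf q}^{(r+1)},t)$ denote $\mathcal Y_r$ expressed in the new variables, i.e. $\mathcal Y_r$ evaluated at $\mathbf q(\bar{\mathbf q},t)$, $\dot{\mathbf q}(\bar{\mathbf q},\dot{\bar{\mathbf q}},t)$, …, $\mathbf q^{(r+1)}(\bar{\mathbf q},\dots,\bar{\mathbf q}^{(r+1)},t)$ (the inverse transformation and its total time derivatives). Then the operator $\mathcal O_r$ is covariant: $$\nabla_{\mathbf q^{(r)}}\mathcal Y_r-(r+1)\frac{d}{dt}\nabla_{\mathbf q^{(r+1)}}\mathcal Y_r=(J_{\mathbf q}\bar{\mathbf q})^T\Big(\nabla_{\bar{\mathbf q}^{(r)}}\widetilde{\mathcal Y}_r-(r+1)\frac{d}{dt}\nabla_{\bar{\mathbf q}^{(r+1)}}\widetilde{\mathcal Y}_r\Big),$$ where both sides are evaluated at corresponding points (equivalently, along any smooth curve $t\mapsto\mathbf q(t)$ and its image $\bar{\mathbf q}(t)=\bar{\mathbf q}(\mathbf q(t)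,t)$).
   Context: $\mathbf q=(q_1,\dots,q_\ell)\in\mathbb R^\ell$; $\mathbf q^{(h)}$ denotes the $h$-th time derivative $d^h\mathbf q/dt^h$ (with $\mathbf q^{(0)}=\mathbf q$), treated as independent variables of the functions considered. For a function $F(\mathbf q,\dots,\mathbf q^{(k)},t)$, $\frac{dF}{dt}=\partial_t F+\sum_{j=0}^{k}\nabla_{\mathbf q^{(j)}}F\cdot\mathbf q^{(j+1)}$ is the total time derivative, and $\nabla_{\mathbf q^{(j)}}F$ is the gradient with respect to the variables $\mathbf q^{(j)}$. For $r\ge0$ and a function $\mathcal Y_r$ depending on $\mathbf q,\dots,\mathbf q^{(r+1)},t$, the extended Lagrangian binomial is $\mathcal O_r[\mathcal Y_r]=\nabla_{\mathbf q^{(r)}}\mathcal Y_r-(r+1)\frac{d}{dt}\nabla_{\mathbf q^{(r+1)}}\mathcal Y_r$ (an $\mathbb R^\ell$-valued function); for $r=0$ it is the usual $\nabla_{\mathbf q}\mathcal L-\frac d{dt}\nabla_{\dot{\mathbf q}}\mathcal L$. *)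

From Stdlib Require Import Reals Lra Lia ClassicalEpsilon.
Open Scope R_scope.

(* Jet space: a point is (p, t) with p j i = i-th coordinate of q^{(j)}.
   Coordinates are indexed by nat; only i < l and j <= N are relevant. *)
Definition jet := nat -> nat -> R.

Fixpoint fsum (n : nat) (f : nat -> R) : R :=
  match n with O => 0 | S m => fsum m f + f m end.

Definition updJ (p : jet) (j i : nat) (y : R) : jet :=
  fun j' i' => if (Nat.eqb j' j && Nat.eqb i' i)%bool then y else p j' i'.

(* a coordinate of the extended jet space: None = time t, Some (j,i) = q^{(j)}_i *)
Definition coord := option (nat * nat).

Definition partial_lim (F : jet -> R -> R) (v : coord) (p : jet) (t d : R) : Prop :=
  match v with
  | None => derivable_pt_lim (fun s => F p s) t d
  | Some (j, i) => derivable_pt_lim (fun y => F (updJ p j i y) t) (p j i) d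
  end.

(* the partial derivative (chosen classically; meaningful where it exists) *)
Definition pd (F : jet -> R -> R) (v : coord) : jet -> R -> R :=
  fun p t => epsilon (inhabits 0) (fun d => partial_lim F v p t d).

Definition coord_ok (N l : nat) (v : coord) : Prop :=
  match v with None => True | Some (j, i) => (j <= N)%nat /\ (i < l)%nat end.

(* joint continuity in the variables q^{(j)}_i (j <= N, i < l) and t
   (in particular F depends on no other coordinate) *)
Definition cont_jet (N l : nat) (F : jet -> R -> R) : Prop :=
  forall p t eps, eps > 0 -> exists delta, delta > 0 /\
    forall p' t', (forall j i, (j <= N)%nat -> (i < l)%nat -> Rabs (p' j i - p j i) < delta) ->
      Rabs (t' - t) < delta -> Rabs (F p' t' - F p t) < eps.

Fixpoint Ck (k N l : nat) (F : jet -> R -> R) : Prop :=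
  match k with
  | O => cont_jet N l F
  | S k' => cont_jet N l F /\
      forall v, coord_ok N l v ->
        (forall p t, exists d, partial_lim F v p t d) /\ Ck k' N l (pd F v)
  end.

Definition smooth (N l : nat) (F : jet -> R -> R) : Prop := forall k, Ck k N l F.

Definition Dt (l k : nat) (F : jet -> R -> R) : jet -> R -> R :=
  fun p t => pd F None p t +
    fsum (S k) (fun j => fsum l (fun i => pd F (Some (j, i)) p t * p (S j) i)).

(* k-th total time derivative of a function of order 0 *)
Fixpoint Dn (l k : nat) (F : jet -> R -> R) : jet -> R -> R :=
  match k with O => F | S m => Dt l m (Dn l m F) end.

(* a time-dependent map of R^l, f x t i = i-th component, lifted to the jet space *)
Definition comp0 (f : (nat -> R) -> R -> nat -> R) (i : nat) : jet -> R -> R :=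
  fun p t => f (p O) t i.

Definition prolong (l : nat) (f : (nat -> R) -> R -> nat -> R) (p : jet) (t : R) : jet :=
  fun j i => Dn l j (comp0 f i) p t.

Definition Jac (f : (nat -> R) -> R -> nat -> R) (x : nat -> R) (t : R) (a b : nat) : R :=
  pd (comp0 f a) (Some (O, b)) (fun _ => x) t.

Fixpoint det (n : nat) (M : nat -> nat -> R) : R :=
  match n with
  | O => 1
  | S m => fsum (S m) (fun j => (-1) ^ j * M O j *
             det m (fun a b => M (S a) (if Nat.ltb b j then b else S b)))
  end.

Definition Oop (l r : nat) (Y : jet -> R -> R) (p : jet) (t : R) (i : nat) : R :=
  pd Y (Some (r, i)) p t - INR (S r) * Dt l (S r) (pd Y (Some (S r, i))) p t.

(* Write W for the jet prolongation of Qbar.  Since Q (Qbar x t) t = x, the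
   prolongation of Q undoes W, so Y = Ytilde o W.  By the chain rule,
   dY/dq^(k)_i = sum_(j,a) dYtilde/dw^(j)_a o W * dW^(j)_a/dq^(k)_i, where
   dW^(j)/dq^(k) vanishes for j < k and, by the "cancellation of dots",
   dW^(k)/dq^(k) = J and dW^(k+1)/dq^(k) = (k+1) dJ/dt.  Hence
   grad_(r+1) Y = J^T (grad_(r+1) Ytilde o W) and
   grad_r Y = J^T (grad_r Ytilde o W) + (r+1) (dJ/dt)^T (grad_(r+1) Ytilde o W);
   as d/dt commutes with pulling back along W, the dJ/dt terms cancel in O_r.
   The cancellation of dots comes from the commutation rule
   d/dq^(k) o d/dt = d/dt o d/dq^(k) + d/dq^(k-1), itself a consequence of the
   symmetry of second partial derivatives. *)
From Stdlib Require Import Reals Lra Lia ClassicalEpsilon Classical FunctionalExtensionality List.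
From Coquelicot Require Coquelicot.
Open Scope R_scope.

Lemma fsum_ext n f g : (forall k, (k < n)%nat -> f k = g k) -> fsum n f = fsum n g.
Proof. induction n; simpl; intros H; auto. rewrite IHn, H; auto; lia. Qed.

Lemma fsum_plus n f g : fsum n (fun k => f k + g k) = fsum n f + fsum n g.
Proof. induction n; simpl; [lra|rewrite IHn; lra]. Qed.

Lemma fsum_mult_l n c f : fsum n (fun k => c * f k) = c * fsum n f.
Proof. induction n; simpl; [lra|rewrite IHn; lra]. Qed.

Lemma fsum_mult_r n c f : fsum n (fun k => f k * c) = fsum n f * c.
Proof. induction n; simpl; [lra|rewrite IHn; lra]. Qed.

Lemma fsum_minus_mult_l n c f g : fsum n f - c * fsum n g = fsum n (fun k => f k - c * g k).
Proof. induction n; simpl; [ring|rewrite <- IHn; ring]. Qed.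

Lemma fsum_zero n f : (forall k, (k < n)%nat -> f k = 0) -> fsum n f = 0.
Proof.
  intros H; rewrite (fsum_ext n f (fun _ => 0)) by auto.
  clear H; induction n; simpl; [|rewrite IHn]; lra.
Qed.

Lemma fsum_swap n m (f : nat -> nat -> R) :
  fsum n (fun a => fsum m (fun b => f a b)) = fsum m (fun b => fsum n (fun a => f a b)).
Proof.
  induction n; simpl.
  - symmetry; apply fsum_zero; auto.
  - rewrite IHn, <- fsum_plus. reflexivity.
Qed.

Lemma fsum_swap4 n1 n2 n3 n4 (f : nat -> nat -> nat -> nat -> R) :
  fsum n1 (fun k => fsum n2 (fun a => fsum n3 (fun j => fsum n4 (fun i => f k a j i)))) =
  fsum n3 (fun j => fsum n4 (fun i => fsum n1 (fun k => fsum n2 (fun a => f k a j i)))).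
Proof.
  transitivity (fsum n1 (fun k => fsum n3 (fun j => fsum n2 (fun a => fsum n4 (fun i => f k a j i))))).
  { apply fsum_ext; intros k _. apply (fsum_swap n2 n3 (fun a j => fsum n4 (fun i => f k a j i))). }
  rewrite (fsum_swap n1 n3 (fun k j => fsum n2 (fun a => fsum n4 (fun i => f k a j i)))).
  apply fsum_ext; intros j _.
  transitivity (fsum n1 (fun k => fsum n4 (fun i => fsum n2 (fun a => f k a j i)))).
  { apply fsum_ext; intros k _. apply (fsum_swap n2 n4 (fun a i => f k a j i)). }
  apply (fsum_swap n1 n4 (fun k i => fsum n2 (fun a => f k a j i))).
Qed.

Lemma fsum_delta n m (f : nat -> R) : (m < n)%nat ->
  fsum n (fun k => if Nat.eqb k m then f k else 0) = f m.
Proof.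
  induction n; intros H; [lia|]. simpl.
  destruct (Nat.eq_dec m n).
  - subst. rewrite Nat.eqb_refl, fsum_zero; [lra|].
    intros k Hk. destruct (Nat.eqb_spec k n); [lia|auto].
  - rewrite IHn by lia. destruct (Nat.eqb_spec n m); [lia|lra].
Qed.

Definition coord_val (p : jet) (t : R) (v : coord) : R :=
  match v with None => t | Some (j, i) => p j i end.

Definition jet_set (p : jet) (v : coord) (y : R) : jet :=
  match v with None => p | Some (j, i) => updJ p j i y end.

Definition time_set (t : R) (v : coord) (y : R) : R :=
  match v with None => y | Some _ => t end.

Definition coord_eqb (a b : coord) : bool :=
  match a, b with
  | None, None => true
  | Some (j, i), Some (j', i') => Nat.eqb j j' && Nat.eqb i i'
  | _, _ => false
  end.

Lemma coord_eqb_spec a b : reflect (a = b) (coord_eqb a b).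
Proof.
  destruct a as [[j i]|], b as [[j' i']|]; simpl; try (constructor; congruence).
  destruct (Nat.eqb_spec j j'), (Nat.eqb_spec i i'); simpl; constructor; congruence.
Qed.

Lemma coord_val_set p t v y c :
  coord_val (jet_set p v y) (time_set t v y) c = if coord_eqb c v then y else coord_val p t c.
Proof. destruct v as [[j i]|], c as [[j' i']|]; simpl; auto. Qed.

Lemma jet_set_set p v y y' : jet_set (jet_set p v y) v y' = jet_set p v y'.
Proof.
  destruct v as [[j i]|]; simpl; auto.
  extensionality a; extensionality b; unfold updJ.
  destruct (Nat.eqb a j && Nat.eqb b i)%bool; auto.
Qed.

Lemma time_set_set t v y y' : time_set (time_set t v y) v y' = time_set t v y'.
Proof. destruct v as [[j i]|]; simpl; auto. Qed.

Lemma jet_set_val p t v : jet_set p v (coord_val p t v) = p.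
Proof.
  destruct v as [[j i]|]; simpl; auto.
  extensionality a; extensionality b; unfold updJ.
  destruct (Nat.eqb_spec a j), (Nat.eqb_spec b i); simpl; subst; auto.
Qed.

Lemma time_set_val p t v : time_set t v (coord_val p t v) = t.
Proof. destruct v as [[j i]|]; simpl; auto. Qed.

Lemma jet_set_comm p u v x y : u <> v -> jet_set (jet_set p u x) v y = jet_set (jet_set p v y) u x.
Proof.
  intros Huv. destruct u as [[j i]|], v as [[j' i']|]; simpl; auto.
  extensionality a; extensionality b. unfold updJ.
  destruct (Nat.eqb_spec a j'), (Nat.eqb_spec b i'), (Nat.eqb_spec a j), (Nat.eqb_spec b i);
    simpl; subst; congruence.
Qed.

Lemma time_set_comm t u v x y : u <> v -> time_set (time_set t u x) v y = time_set (time_set t v y) u x.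
Proof. intros Huv. destruct u as [[j i]|], v as [[j' i']|]; simpl; auto. congruence. Qed.

Lemma partial_limE F v p t d :
  partial_lim F v p t d <->
  derivable_pt_lim (fun y => F (jet_set p v y) (time_set t v y)) (coord_val p t v) d.
Proof. destruct v as [[j i]|]; simpl; tauto. Qed.

Lemma pd_eq_lim F v p t d : partial_lim F v p t d -> pd F v p t = d.
Proof.
  intros H. unfold pd.
  pose proof (epsilon_spec (inhabits 0) _ (ex_intro _ d H)) as H2.
  apply partial_limE in H, H2.
  eapply uniqueness_limite; eauto.
Qed.

Lemma derivable_pt_lim_coord F c : (forall p t, exists d, partial_lim F c p t d) ->
  forall p t y, derivable_pt_lim (fun y => F (jet_set p c y) (time_set t c y)) y
                  (pd F c (jet_set p c y) (time_set t c y)).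
Proof.
  intros H p t y. destruct (H (jet_set p c y) (time_set t c y)) as [d Hd].
  rewrite (pd_eq_lim _ _ _ _ _ Hd). apply partial_limE in Hd.
  rewrite coord_val_set in Hd. destruct (coord_eqb_spec c c); [|congruence].
  replace (fun y0 => F (jet_set p c y0) (time_set t c y0)) with
    (fun y0 => F (jet_set (jet_set p c y) c y0) (time_set (time_set t c y) c y0)); auto.
  extensionality y0. rewrite jet_set_set, time_set_set; auto.
Qed.

Lemma cont_jet_eq N l F p p' t : cont_jet N l F ->
  (forall j i, (j <= N)%nat -> (i < l)%nat -> p' j i = p j i) -> F p' t = F p t.
Proof.
  intros HF Ha. destruct (Req_dec (F p' t) (F p t)) as [e|ne]; auto.
  exfalso. assert (He : Rabs (F p' t - F p t) > 0) by (apply Rabs_pos_lt; lra).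
  destruct (HF p t _ He) as [d [Hd H]].
  specialize (H p' t). rewrite Rminus_diag, Rabs_R0 in H.
  enough (Rabs (F p' t - F p t) < Rabs (F p' t - F p t)) by lra.
  apply H; auto. intros j i Hj Hi. rewrite Ha by auto. rewrite Rminus_diag, Rabs_R0; lra.
Qed.

Lemma cont_jet_eq_coord N l F p p' t t' : cont_jet N l F ->
  (forall c, coord_ok N l c -> coord_val p' t' c = coord_val p t c) -> F p' t' = F p t.
Proof.
  intros HF H. assert (t' = t) by (apply (H None); simpl; auto). subst.
  apply (cont_jet_eq N l); auto. intros j i Hj Hi. apply (H (Some (j, i))). simpl; auto.
Qed.

Lemma partial_lim_inactive N l F j i p t : cont_jet N l F -> ~ coord_ok N l (Some (j, i)) ->
  partial_lim F (Some (j, i)) p t 0.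
Proof.
  intros HF Hn. simpl.
  replace (fun y => F (updJ p j i y) t) with (fun _ : R => F p t); [apply derivable_pt_lim_const|].
  extensionality y. symmetry. apply (cont_jet_eq N l); auto. intros j' i' Hj Hi. unfold updJ.
  destruct (Nat.eqb_spec j' j), (Nat.eqb_spec i' i); simpl; auto. subst. simpl in Hn; tauto.
Qed.

Lemma pd_inactive N l F j i : cont_jet N l F -> ~ coord_ok N l (Some (j, i)) ->
  pd F (Some (j, i)) = fun _ _ => 0.
Proof.
  intros; extensionality p; extensionality t; apply pd_eq_lim; eapply partial_lim_inactive; eauto.
Qed.

Definition has_partials (N l : nat) (F : jet -> R -> R) : Prop :=
  forall c, coord_ok N l c -> forall p t, exists d, partial_lim F c p t d.

Lemma Ck_cont k N l F : Ck k N l F -> cont_jet N l F.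
Proof. destruct k; simpl; tauto. Qed.

Lemma Ck_S_inv k N l F : Ck (S k) N l F ->
  cont_jet N l F /\ has_partials N l F /\ (forall c, coord_ok N l c -> Ck k N l (pd F c)).
Proof. simpl. intros [Hc H]. split; auto. split; intros c Hv; destruct (H c Hv); auto. Qed.

Lemma Ck_pred k N l F : Ck (S k) N l F -> Ck k N l F.
Proof.
  revert F; induction k; intros F H; simpl in *; [tauto|].
  destruct H as [Hc H]. split; auto. intros v Hv. destruct (H v Hv); split; auto.
Qed.

Lemma smooth_cont N l F : smooth N l F -> cont_jet N l F.
Proof. intros H; apply (H O). Qed.

Lemma smooth_pd N l F v : smooth N l F -> coord_ok N l v -> smooth N l (pd F v).
Proof. intros H Hv k. apply (Ck_S_inv k N l F (H (S k))); auto. Qed.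

Lemma smooth_has_partials N l F : smooth N l F -> has_partials N l F.
Proof. intros H. apply (Ck_S_inv O N l F (H 1%nat)). Qed.

Lemma smooth_partial_ex N l F c p t : smooth N l F -> exists d, partial_lim F c p t d.
Proof.
  intros H. destruct (classic (coord_ok N l c)) as [Hc|Hc].
  - apply (smooth_has_partials N l); auto.
  - destruct c as [[j i]|]; [|simpl in Hc; tauto].
    exists 0. apply (partial_lim_inactive N l); auto. apply smooth_cont, H.
Qed.

Lemma smooth_has_partials_any N k l F : smooth N l F -> has_partials k l F.
Proof. intros H c _ p t. apply (smooth_partial_ex N l); auto. Qed.

Lemma partial_lim_const c v p t : partial_lim (fun _ _ => c) v p t 0.
Proof. apply partial_limE, derivable_pt_lim_const. Qed.

Lemma pd_const c v : pd (fun _ _ => c) v = fun _ _ => 0.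
Proof. extensionality p; extensionality t; apply pd_eq_lim, partial_lim_const. Qed.

Lemma cont_jet_const N l c : cont_jet N l (fun _ _ => c).
Proof. intros p t e He; exists 1; split; [lra|]. intros; rewrite Rminus_diag, Rabs_R0; lra. Qed.

Lemma Ck_const k N l c : Ck k N l (fun _ _ => c).
Proof.
  revert c; induction k; intros c; simpl; [apply cont_jet_const|]. split; [apply cont_jet_const|].
  intros v _. split; [eauto using partial_lim_const|]. rewrite pd_const. apply IHk.
Qed.

Lemma cont_jet_S N l F : cont_jet N l F -> cont_jet (S N) l F.
Proof. intros H p t e He. destruct (H p t e He) as [d [Hd H2]]. exists d; split; auto. Qed.

Lemma Ck_order_S k N l F : Ck k N l F -> Ck k (S N) l F.
Proof.
  revert F; induction k; intros F H; simpl in *; [apply cont_jet_S; auto|].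
  destruct H as [Hc H]. split; [apply cont_jet_S; auto|].
  intros [[j i]|] Hv.
  - destruct (Nat.eq_dec j (S N)).
    + subst. rewrite (pd_inactive N l F (S N) i Hc) by (simpl; lia).
      split; [|apply Ck_const].
      intros; exists 0; apply (partial_lim_inactive N l); auto; simpl; lia.
    + destruct (H (Some (j, i))) as [H1 H2]; [simpl in *; lia|]. split; auto.
  - destruct (H None) as [H1 H2]; simpl; auto.
Qed.

Lemma Ck_order_le k N N' l F : (N <= N')%nat -> Ck k N l F -> Ck k N' l F.
Proof. induction 1; auto. intros; apply Ck_order_S; auto. Qed.

Lemma partial_lim_plus F G v p t a b : partial_lim F v p t a -> partial_lim G v p t b ->
  partial_lim (fun p t => F p t + G p t) v p t (a + b).
Proof.
  rewrite !partial_limE. intros H1 H2.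
  apply (derivable_pt_lim_plus (fun y => F (jet_set p v y) (time_set t v y))
                               (fun y => G (jet_set p v y) (time_set t v y))); auto.
Qed.

Lemma partial_lim_mult F G v p t a b : partial_lim F v p t a -> partial_lim G v p t b ->
  partial_lim (fun p t => F p t * G p t) v p t (a * G p t + F p t * b).
Proof.
  rewrite !partial_limE. intros H1 H2.
  pose proof (derivable_pt_lim_mult _ _ _ _ _ H1 H2) as H.
  cbv beta in H. rewrite (jet_set_val p t v), (time_set_val p t v) in H. exact H.
Qed.

Lemma pd_plus F G v p t : (exists a, partial_lim F v p t a) -> (exists b, partial_lim G v p t b) ->
  pd (fun p t => F p t + G p t) v p t = pd F v p t + pd G v p t.
Proof.
  intros [a Ha] [b Hb]. rewrite (pd_eq_lim _ _ _ _ _ Ha), (pd_eq_lim _ _ _ _ _ Hb).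
  apply pd_eq_lim, partial_lim_plus; auto.
Qed.

Lemma pd_mult F G v p t : (exists a, partial_lim F v p t a) -> (exists b, partial_lim G v p t b) ->
  pd (fun p t => F p t * G p t) v p t = pd F v p t * G p t + F p t * pd G v p t.
Proof.
  intros [a Ha] [b Hb]. rewrite (pd_eq_lim _ _ _ _ _ Ha), (pd_eq_lim _ _ _ _ _ Hb).
  apply pd_eq_lim, partial_lim_mult; auto.
Qed.

Lemma has_partials_plus k l F G : has_partials k l F -> has_partials k l G ->
  has_partials k l (fun p t => F p t + G p t).
Proof.
  intros HF HG c Hc p t. destruct (HF c Hc p t) as [a Ha], (HG c Hc p t) as [b Hb].
  eexists; apply partial_lim_plus; eauto.
Qed.

Lemma has_partials_mult k l F G : has_partials k l F -> has_partials k l G ->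
  has_partials k l (fun p t => F p t * G p t).
Proof.
  intros HF HG c Hc p t. destruct (HF c Hc p t) as [a Ha], (HG c Hc p t) as [b Hb].
  eexists; apply partial_lim_mult; eauto.
Qed.

Lemma has_partials_fsum k l n (f : nat -> jet -> R -> R) :
  (forall m, (m < n)%nat -> has_partials k l (f m)) ->
  has_partials k l (fun p t => fsum n (fun m => f m p t)).
Proof.
  induction n; intros H; simpl.
  - intros v _ p t; eexists; apply partial_lim_const.
  - apply (has_partials_plus k l (fun p t => fsum n (fun m => f m p t)) (f n)); auto.
Qed.

Lemma pd_fsum k l n (f : nat -> jet -> R -> R) u p t :
  (forall m, (m < n)%nat -> has_partials k l (f m)) -> coord_ok k l u ->
  pd (fun p t => fsum n (fun m => f m p t)) u p t = fsum n (fun m => pd (f m) u p t).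
Proof.
  induction n; intros H Hu; simpl.
  - rewrite pd_const; auto.
  - rewrite (pd_plus (fun p t => fsum n (fun m => f m p t)) (f n)).
    + rewrite IHn; auto.
    + apply (has_partials_fsum k l n f); auto.
    + apply H; auto.
Qed.

Lemma cont_jet_plus N l F G : cont_jet N l F -> cont_jet N l G ->
  cont_jet N l (fun p t => F p t + G p t).
Proof.
  intros HF HG p t e He.
  destruct (HF p t (e/2)) as [d1 [Hd1 H1]]; [lra|].
  destruct (HG p t (e/2)) as [d2 [Hd2 H2]]; [lra|].
  exists (Rmin d1 d2); split; [apply Rmin_pos; auto|].
  intros p' t' Hp Ht.
  assert (Rabs (F p' t' - F p t) < e/2).
  { apply H1; [intros; eapply Rlt_le_trans; [apply Hp; auto|apply Rmin_l]
              |eapply Rlt_le_trans; [apply Ht|apply Rmin_l]]. }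
  assert (Rabs (G p' t' - G p t) < e/2).
  { apply H2; [intros; eapply Rlt_le_trans; [apply Hp; auto|apply Rmin_r]
              |eapply Rlt_le_trans; [apply Ht|apply Rmin_r]]. }
  replace (F p' t' + G p' t' - (F p t + G p t)) with ((F p' t' - F p t) + (G p' t' - G p t)) by ring.
  eapply Rle_lt_trans; [apply Rabs_triang|lra].
Qed.

Lemma Rabs_mult_minus_lt A A0 q g eps : eps > 0 ->
  Rabs (A - A0) < eps / (2 * (Rabs g + 1)) ->
  Rabs (q - g) < Rmin 1 (eps / (2 * (Rabs A0 + 1))) ->
  Rabs (A * q - A0 * g) < eps.
Proof.
  intros He H1 H2.
  pose proof (Rabs_pos g). pose proof (Rabs_pos A0).
  assert (Hq1 : Rabs (q - g) < 1) by (eapply Rlt_le_trans; [apply H2|apply Rmin_l]).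
  assert (Hq2 : Rabs (q - g) < eps / (2 * (Rabs A0 + 1)))
    by (eapply Rlt_le_trans; [apply H2|apply Rmin_r]).
  assert (Hq : Rabs q <= Rabs g + 1).
  { replace q with ((q - g) + g) by ring. eapply Rle_trans; [apply Rabs_triang|lra]. }
  replace (A * q - A0 * g) with ((A - A0) * q + A0 * (q - g)) by ring.
  eapply Rle_lt_trans; [apply Rabs_triang|]. rewrite !Rabs_mult.
  assert (E1 : Rabs (A - A0) * Rabs q <= eps / 2).
  { apply Rle_trans with (eps / (2 * (Rabs g + 1)) * (Rabs g + 1)).
    - apply Rmult_le_compat; auto using Rabs_pos; lra.
    - right; field; lra. }
  assert (E2 : Rabs A0 * Rabs (q - g) < eps / 2).
  { apply Rle_lt_trans with (Rabs A0 * (eps / (2 * (Rabs A0 + 1)))).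
    - apply Rmult_le_compat_l; [apply Rabs_pos|lra].
    - apply Rmult_lt_reg_r with (2 * (Rabs A0 + 1)); [lra|].
      field_simplify; [nra|lra]. }
  lra.
Qed.

Lemma cont_jet_mult N l F G : cont_jet N l F -> cont_jet N l G ->
  cont_jet N l (fun p t => F p t * G p t).
Proof.
  intros HF HG p t e He.
  pose proof (Rabs_pos (G p t)). pose proof (Rabs_pos (F p t)).
  destruct (HF p t (e / (2 * (Rabs (G p t) + 1)))) as [d1 [Hd1 H1]].
  { apply Rdiv_lt_0_compat; lra. }
  destruct (HG p t (Rmin 1 (e / (2 * (Rabs (F p t) + 1))))) as [d2 [Hd2 H2]].
  { apply Rmin_pos; [lra|apply Rdiv_lt_0_compat; lra]. }
  exists (Rmin d1 d2); split; [apply Rmin_pos; auto|].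
  intros p' t' Hp Ht. apply Rabs_mult_minus_lt; auto.
  - apply H1; [intros; eapply Rlt_le_trans; [apply Hp; auto|apply Rmin_l]
              |eapply Rlt_le_trans; [apply Ht|apply Rmin_l]].
  - apply H2; [intros; eapply Rlt_le_trans; [apply Hp; auto|apply Rmin_r]
              |eapply Rlt_le_trans; [apply Ht|apply Rmin_r]].
Qed.

Lemma Ck_plus k N l F G : Ck k N l F -> Ck k N l G -> Ck k N l (fun p t => F p t + G p t).
Proof.
  revert F G; induction k; intros F G HF HG; [apply cont_jet_plus; auto|].
  apply Ck_S_inv in HF as (HFc & HFp & HFk), HG as (HGc & HGp & HGk).
  split; [apply cont_jet_plus; auto|]. intros v Hv. split.
  - apply (has_partials_plus N l F G HFp HGp v Hv).
  - replace (pd (fun p t => F p t + G p t) v) with (fun p t => pd F v p t + pd G v p t).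
    + apply IHk; auto.
    + extensionality p; extensionality t. symmetry. apply pd_plus; auto.
Qed.

Lemma Ck_mult k N l F G : Ck k N l F -> Ck k N l G -> Ck k N l (fun p t => F p t * G p t).
Proof.
  revert F G; induction k; intros F G HF HG; [apply cont_jet_mult; auto|].
  pose proof (Ck_pred _ _ _ _ HF) as HF'. pose proof (Ck_pred _ _ _ _ HG) as HG'.
  apply Ck_S_inv in HF as (HFc & HFp & HFk), HG as (HGc & HGp & HGk).
  split; [apply cont_jet_mult; auto|]. intros v Hv. split.
  - apply (has_partials_mult N l F G HFp HGp v Hv).
  - replace (pd (fun p t => F p t * G p t) v)
      with (fun p t => pd F v p t * G p t + F p t * pd G v p t).
    + apply Ck_plus; apply IHk; auto.
    + extensionality p; extensionality t. symmetry. apply pd_mult; auto.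
Qed.

Lemma Ck_fsum k N l n (f : nat -> jet -> R -> R) :
  (forall m, (m < n)%nat -> Ck k N l (f m)) -> Ck k N l (fun p t => fsum n (fun m => f m p t)).
Proof.
  induction n; intros H; simpl; [apply Ck_const|].
  apply (Ck_plus k N l (fun p t => fsum n (fun m => f m p t)) (f n)); auto.
Qed.

Lemma partial_lim_proj j i v p t :
  partial_lim (fun p _ => p j i) v p t
    (match v with
     | None => 0
     | Some (j', i') => if (Nat.eqb j j' && Nat.eqb i i')%bool then 1 else 0
     end).
Proof.
  destruct v as [[j' i']|]; simpl; [|apply derivable_pt_lim_const].
  unfold updJ. destruct (Nat.eqb j j' && Nat.eqb i i')%bool.
  - apply derivable_pt_lim_id.
  - apply derivable_pt_lim_const.
Qed.

Lemma Ck_proj k N l j i : (j <= N)%nat -> (i < l)%nat -> Ck k N l (fun p _ => p j i).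
Proof.
  intros Hj Hi.
  assert (Hc : cont_jet N l (fun p _ => p j i)) by (intros p t e He; exists e; split; auto).
  destruct k; [exact Hc|]. split; [exact Hc|].
  intros v Hv. split; [intros; eexists; apply partial_lim_proj|].
  erewrite (functional_extensionality _ _ (fun p =>
              functional_extensionality _ _ (fun t => pd_eq_lim _ _ _ _ _ (partial_lim_proj j i v p t)))).
  apply Ck_const.
Qed.

(** * The chain rule *)

Definition near (N l : nat) (d : R) (p : jet) (t : R) (p' : jet) (t' : R) : Prop :=
  forall c, coord_ok N l c -> Rabs (coord_val p' t' c - coord_val p t c) < d.

Lemma near_le N l d d' p t p' t' : d <= d' -> near N l d p t p' t' -> near N l d' p t p' t'.
Proof. intros Hd H c Hc. specialize (H c Hc). lra. Qed.

Lemma finite_delta (n : nat) (P : nat -> R -> Prop) :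
  (forall k d d', 0 < d' <= d -> P k d -> P k d') ->
  (forall k, (k < n)%nat -> exists d, d > 0 /\ P k d) ->
  exists d, d > 0 /\ forall k, (k < n)%nat -> P k d.
Proof.
  intros Hm; induction n; intros H.
  - exists 1; split; [lra|intros; lia].
  - destruct IHn as [d1 [Hd1 H1]]; [intros; apply H; lia|].
    destruct (H n) as [d2 [Hd2 H2]]; [lia|].
    exists (Rmin d1 d2); split; [apply Rmin_pos; auto|].
    intros k Hk. destruct (Nat.eq_dec k n).
    + subst. apply (Hm n d2); auto. split; [apply Rmin_pos; auto|apply Rmin_r].
    + apply (Hm k d1); [split; [apply Rmin_pos; auto|apply Rmin_l]|apply H1; lia].
Qed.

Lemma finite_delta_coord N l (P : coord -> R -> Prop) :
  (forall c d d', 0 < d' <= d -> P c d -> P c d') ->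
  (forall c, coord_ok N l c -> exists d, d > 0 /\ P c d) ->
  exists d, d > 0 /\ forall c, coord_ok N l c -> P c d.
Proof.
  intros Hm H.
  destruct (finite_delta (S N) (fun j d => forall i, (i < l)%nat -> P (Some (j, i)) d))
    as [d1 [Hd1 H1]].
  { intros k d d' Hd Hk i Hi. eapply Hm; eauto. }
  { intros j Hj. apply finite_delta; [intros; eapply Hm; eauto|].
    intros i Hi. apply H. simpl; split; lia. }
  destruct (H None) as [d2 [Hd2 H2]]; [simpl; auto|].
  exists (Rmin d1 d2); split; [apply Rmin_pos; auto|].
  intros [[j i]|] Hc.
  - simpl in Hc. apply (Hm _ d1); [split; [apply Rmin_pos; auto|apply Rmin_l]|apply H1; lia].
  - apply (Hm _ d2); [split; [apply Rmin_pos; auto|apply Rmin_r]|auto].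
Qed.

Lemma cont_jet_near N l F p t e : cont_jet N l F -> e > 0 -> exists d, d > 0 /\
  forall p' t', near N l d p t p' t' -> Rabs (F p' t' - F p t) < e.
Proof.
  intros HF He. destruct (HF p t e He) as [d [Hd H]]. exists d; split; auto.
  intros p' t' Hc. apply H.
  - intros j i Hj Hi. apply (Hc (Some (j, i))). simpl; auto.
  - apply (Hc None). simpl; auto.
Qed.

Definition comp (F : jet -> R -> R) (G : jet -> R -> jet) : jet -> R -> R :=
  fun p t => F (G p t) t.

Definition jet_coord (G : jet -> R -> jet) (j i : nat) : jet -> R -> R := fun p t => G p t j i.

Lemma cont_jet_coords N l1 M l2 G :
  (forall j i, (j <= N)%nat -> (i < l1)%nat -> cont_jet M l2 (jet_coord G j i)) ->
  forall p t e, e > 0 -> exists d, d > 0 /\ forall p' t', near M l2 d p t p' t' ->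
    forall j i, (j <= N)%nat -> (i < l1)%nat -> Rabs (G p' t' j i - G p t j i) < e.
Proof.
  intros HG p t e He.
  destruct (finite_delta (S N) (fun j d => forall i, (i < l1)%nat -> forall p' t',
      near M l2 d p t p' t' -> Rabs (G p' t' j i - G p t j i) < e)) as [d [Hd H]].
  { intros k d d' Hd Hk i Hi p' t' Hp. apply Hk; auto. eapply near_le; [|eauto]; lra. }
  { intros j Hj. apply finite_delta.
    - intros i d d' Hd Hk p' t' Hp. apply Hk. eapply near_le; [|eauto]; lra.
    - intros i Hi. apply (cont_jet_near M l2 (jet_coord G j i)); auto. apply HG; lia. }
  exists d; split; auto. intros p' t' Hp j i Hj Hi. apply H; auto; lia.
Qed.

Lemma cont_jet_comp N l1 M l2 F G : cont_jet N l1 F ->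
  (forall j i, (j <= N)%nat -> (i < l1)%nat -> cont_jet M l2 (jet_coord G j i)) ->
  cont_jet M l2 (comp F G).
Proof.
  intros HF HG p t e He.
  destruct (HF (G p t) t e He) as [d1 [Hd1 H1]].
  destruct (cont_jet_coords N l1 M l2 G HG p t d1 Hd1) as [d2 [Hd2 H2]].
  exists (Rmin d1 d2); split; [apply Rmin_pos; auto|].
  intros p' t' Hp Ht. apply H1.
  - apply H2; intros [[j' i']|] Hc; simpl.
    + eapply Rlt_le_trans; [apply Hp; simpl in Hc; tauto|apply Rmin_r].
    + eapply Rlt_le_trans; [apply Ht|apply Rmin_r].
  - eapply Rlt_le_trans; [apply Ht|apply Rmin_l].
Qed.

Lemma derivable_pt_lim_cont f s0 g : derivable_pt_lim f s0 g ->
  forall e, e > 0 -> exists d, d > 0 /\ forall s, Rabs (s - s0) < d -> Rabs (f s - f s0) < e.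
Proof.
  intros H e He.
  destruct (derivable_continuous_pt f s0 (exist _ g H) e He) as [d [Hd Hc]].
  exists d; split; auto. intros s Hs. destruct (Req_dec s s0) as [->|Hne].
  - rewrite Rminus_diag, Rabs_R0; lra.
  - apply (Hc s). split; [split; [exact I|auto]|exact Hs].
Qed.

Lemma MVT_between (f f' : R -> R) a b : (forall y, derivable_pt_lim f y (f' y)) ->
  exists c, f b - f a = f' c * (b - a) /\ Rabs (c - a) <= Rabs (b - a).
Proof.
  intros H. destruct (Rtotal_order a b) as [Hab|[Hab|Hab]].
  - destruct (MVT_cor2 f f' a b Hab) as [c [H1 H2]]; [intros; apply H|].
    exists c; split; auto. rewrite !Rabs_right; lra.
  - subst. exists b; split; [ring|]. rewrite Rminus_diag, Rabs_R0; lra.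
  - destruct (MVT_cor2 f f' b a Hab) as [c [H1 H2]]; [intros; apply H|].
    exists c; split; [lra|]. rewrite !Rabs_left1; lra.
Qed.

(* Moving only the coordinate [c] along [x] while the other coordinates follow
   a continuous path (q, u): the mean value theorem in [c] and the continuity of
   the partial derivative give the derivative of the increment. *)
Lemma derivable_pt_lim_increment N l F c (q : R -> jet) (u : R -> R) (x : R -> R) s0 g :
  (forall p t, exists d, partial_lim F c p t d) ->
  cont_jet N l (pd F c) ->
  derivable_pt_lim x s0 g ->
  (forall e, e > 0 -> exists d, d > 0 /\ forall s, Rabs (s - s0) < d ->
     near N l e (q s0) (u s0) (q s) (u s)) ->
  derivable_pt_lim (fun s => F (jet_set (q s) c (x s)) (time_set (u s) c (x s))
                             - F (jet_set (q s) c (x s0)) (time_set (u s) c (x s0))) s0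
    (pd F c (jet_set (q s0) c (x s0)) (time_set (u s0) c (x s0)) * g).
Proof.
  intros HFp HFc Hx Hq eps Heps.
  set (A0 := pd F c (jet_set (q s0) c (x s0)) (time_set (u s0) c (x s0))).
  pose proof (Rabs_pos g). pose proof (Rabs_pos A0).
  destruct (cont_jet_near N l (pd F c) (jet_set (q s0) c (x s0)) (time_set (u s0) c (x s0))
              (eps / (2 * (Rabs g + 1)))) as [dF [HdF HF']]; auto.
  { apply Rdiv_lt_0_compat; lra. }
  destruct (Hq dF HdF) as [d1 [Hd1 Hq1]].
  destruct (derivable_pt_lim_cont x s0 g Hx dF HdF) as [d2 [Hd2 Hx2]].
  destruct (Hx (Rmin 1 (eps / (2 * (Rabs A0 + 1))))) as [d3 Hd3].
  { apply Rmin_pos; [lra|apply Rdiv_lt_0_compat; lra]. }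
  assert (Hpos : 0 < Rmin d1 (Rmin d2 d3)) by (repeat apply Rmin_pos; auto; apply cond_pos).
  exists (mkposreal _ Hpos). intros h Hh0 Hh. simpl in Hh.
  assert (Hh1 : Rabs h < d1) by (eapply Rlt_le_trans; [apply Hh|apply Rmin_l]).
  assert (Hh2 : Rabs h < d2)
    by (eapply Rlt_le_trans; [apply Hh|eapply Rle_trans; [apply Rmin_r|apply Rmin_l]]).
  assert (Hh3 : Rabs h < d3)
    by (eapply Rlt_le_trans; [apply Hh|eapply Rle_trans; [apply Rmin_r|apply Rmin_r]]).
  destruct (MVT_between (fun y => F (jet_set (q (s0 + h)) c y) (time_set (u (s0 + h)) c y))
     (fun y => pd F c (jet_set (q (s0 + h)) c y) (time_set (u (s0 + h)) c y)) (x s0) (x (s0 + h))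
     (derivable_pt_lim_coord F c HFp (q (s0 + h)) (u (s0 + h)))) as [xi [E Hxi]].
  cbv beta in E |- *. rewrite E, Rminus_diag, Rminus_0_r.
  replace (pd F c (jet_set (q (s0 + h)) c xi) (time_set (u (s0 + h)) c xi) * (x (s0 + h) - x s0) / h)
    with (pd F c (jet_set (q (s0 + h)) c xi) (time_set (u (s0 + h)) c xi) * ((x (s0 + h) - x s0) / h))
    by (field; auto).
  apply Rabs_mult_minus_lt; auto.
  apply HF'. intros c' Hc'. rewrite !coord_val_set. destruct (coord_eqb c' c).
  - eapply Rle_lt_trans; [apply Hxi|]. apply Hx2. replace (s0 + h - s0) with h by ring; auto.
  - apply Hq1; auto. replace (s0 + h - s0) with h by ring; auto.
Qed.

Definition sum_list (L : list coord) (f : coord -> R) : R := fold_right (fun c acc => f c + acc) 0 L.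

Lemma near_path N l (ga : R -> jet) ta s0 g' L :
  (forall c, In c L -> derivable_pt_lim (fun s => coord_val (ga s) (ta s) c) s0 (g' c)) ->
  (forall c, coord_ok N l c -> ~ In c L -> forall s,
     coord_val (ga s) (ta s) c = coord_val (ga s0) (ta s0) c) ->
  forall e, e > 0 -> exists d, d > 0 /\ forall s, Rabs (s - s0) < d ->
    near N l e (ga s0) (ta s0) (ga s) (ta s).
Proof.
  intros Hd Hk e He.
  destruct (finite_delta_coord N l (fun c d => forall s, Rabs (s - s0) < d ->
      Rabs (coord_val (ga s) (ta s) c - coord_val (ga s0) (ta s0) c) < e)) as [d [Hd0 H]].
  { intros c d d' Hdd H s Hs. apply H; lra. }
  { intros c Hc. destruct (classic (In c L)) as [Hin|Hin].
    - apply (derivable_pt_lim_cont (fun s => coord_val (ga s) (ta s) c) s0 (g' c)); auto.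
    - exists 1; split; [lra|]. intros s _. rewrite Hk; auto. rewrite Rminus_diag, Rabs_R0; lra. }
  exists d; split; auto. intros s Hs c Hc. apply H; auto.
Qed.

Lemma derivable_pt_lim_freeze N l F c (ga : R -> jet) (ta : R -> R) s0 g :
  let x0 := coord_val (ga s0) (ta s0) c in
  (forall p t, exists d, partial_lim F c p t d) -> cont_jet N l (pd F c) ->
  derivable_pt_lim (fun s => coord_val (ga s) (ta s) c) s0 g ->
  (forall e, e > 0 -> exists d, d > 0 /\ forall s, Rabs (s - s0) < d ->
     near N l e (jet_set (ga s0) c x0) (time_set (ta s0) c x0)
                (jet_set (ga s) c x0) (time_set (ta s) c x0)) ->
  derivable_pt_lim (fun s => F (ga s) (ta s) - F (jet_set (ga s) c x0) (time_set (ta s) c x0)) s0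
    (pd F c (ga s0) (ta s0) * g).
Proof.
  intros x0 HFp HFc Hx Hq.
  assert (H := derivable_pt_lim_increment N l F c (fun s => jet_set (ga s) c x0)
                 (fun s => time_set (ta s) c x0) (fun s => coord_val (ga s) (ta s) c) s0 g HFp HFc Hx Hq).
  assert (Ef : forall s,
    F (jet_set (jet_set (ga s) c x0) c (coord_val (ga s) (ta s) c))
      (time_set (time_set (ta s) c x0) c (coord_val (ga s) (ta s) c))
    - F (jet_set (jet_set (ga s) c x0) c (coord_val (ga s0) (ta s0) c))
        (time_set (time_set (ta s) c x0) c (coord_val (ga s0) (ta s0) c))
    = F (ga s) (ta s) - F (jet_set (ga s) c x0) (time_set (ta s) c x0)).
  { intros s. rewrite !jet_set_set, !time_set_set, jet_set_val, time_set_val. reflexivity. }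
  cbv beta in H. rewrite (functional_extensionality _ _ Ef) in H.
  rewrite jet_set_set, time_set_set in H. unfold x0 in H. rewrite jet_set_val, time_set_val in H.
  exact H.
Qed.

(* Induction on the list L of moving coordinates: freezing the first one at its
   value at s0 splits off the increment of [derivable_pt_lim_freeze]. *)
Lemma chain_rule_list N l F (ga : R -> jet) (ta : R -> R) s0 (g' : coord -> R) L :
  cont_jet N l F -> has_partials N l F -> (forall c, coord_ok N l c -> cont_jet N l (pd F c)) ->
  (forall c, In c L -> coord_ok N l c) -> NoDup L ->
  (forall c, In c L -> derivable_pt_lim (fun s => coord_val (ga s) (ta s) c) s0 (g' c)) ->
  (forall c, coord_ok N l c -> ~ In c L -> forall s,
     coord_val (ga s) (ta s) c = coord_val (ga s0) (ta s0) c) ->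
  derivable_pt_lim (fun s => F (ga s) (ta s)) s0 (sum_list L (fun c => pd F c (ga s0) (ta s0) * g' c)).
Proof.
  intros HF HFp HFc. revert ga ta. induction L as [|c L IH]; intros ga ta HL ND Hd Hk.
  - replace (fun s => F (ga s) (ta s)) with (fun _ : R => F (ga s0) (ta s0));
      [apply derivable_pt_lim_const|].
    extensionality s. symmetry. apply (cont_jet_eq_coord N l); auto.
  - inversion ND as [|? ? Hnin ND']; subst.
    set (x0 := coord_val (ga s0) (ta s0) c).
    set (ga' := fun s => jet_set (ga s) c x0). set (ta' := fun s => time_set (ta s) c x0).
    assert (Hval : forall c' s, c' <> c -> coord_val (ga' s) (ta' s) c' = coord_val (ga s) (ta s) c').
    { intros c' s Hc'. unfold ga', ta'. rewrite coord_val_set.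
      destruct (coord_eqb_spec c' c); congruence. }
    assert (Hd' : forall c', In c' L -> derivable_pt_lim (fun s => coord_val (ga' s) (ta' s) c') s0 (g' c')).
    { intros c' Hc'. assert (Hne : c' <> c) by (intros ->; tauto).
      rewrite (functional_extensionality _ _ (fun s => Hval c' s Hne)). apply Hd. right; auto. }
    assert (Hk' : forall c', coord_ok N l c' -> ~ In c' L -> forall s,
                 coord_val (ga' s) (ta' s) c' = coord_val (ga' s0) (ta' s0) c').
    { intros c' Hc' Hn s. destruct (coord_eqb_spec c' c) as [->|Hne].
      - unfold ga', ta'. rewrite !coord_val_set. destruct (coord_eqb_spec c c); congruence.
      - rewrite !Hval by auto. apply Hk; auto. intros [H|H]; [congruence|tauto]. }
    assert (HIH := IH ga' ta' (fun c' H => HL c' (or_intror H)) ND' Hd' Hk').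
    assert (E0 : ga' s0 = ga s0 /\ ta' s0 = ta s0)
      by (unfold ga', ta', x0; split; [apply jet_set_val|apply time_set_val]).
    assert (Hinc := derivable_pt_lim_freeze N l F c ga ta s0 (g' c)
       (HFp c (HL c (or_introl eq_refl))) (HFc c (HL c (or_introl eq_refl)))
       (Hd c (or_introl eq_refl)) (near_path N l ga' ta' s0 g' L Hd' Hk')).
    destruct E0 as [E1 E2]. rewrite E1, E2 in HIH.
    replace (fun s => F (ga s) (ta s))
      with (fun s => F (ga s) (ta s) - F (ga' s) (ta' s) + F (ga' s) (ta' s))
      by (extensionality s; ring).
    apply (derivable_pt_lim_plus _ _ _ _ _ Hinc HIH).
Qed.

Fixpoint jet_coords (n l : nat) : list coord :=
  match n with
  | O => nil
  | S m => jet_coords m l ++ map (fun i => Some (m, i)) (seq 0 l)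
  end.

Definition all_coords N l : list coord := None :: jet_coords (S N) l.

Lemma in_jet_coords n l c :
  In c (jet_coords n l) <-> exists j i, c = Some (j, i) /\ (j < n)%nat /\ (i < l)%nat.
Proof.
  induction n; simpl.
  - split; [tauto|intros (j & i & _ & H & _); lia].
  - rewrite in_app_iff, IHn, in_map_iff. split.
    + intros [(j & i & -> & H1 & H2)|(i & <- & Hi)].
      * exists j, i; repeat split; lia.
      * apply in_seq in Hi. exists n, i; repeat split; lia.
    + intros (j & i & -> & H1 & H2). destruct (Nat.eq_dec j n).
      * right. subst. exists i; split; auto. apply in_seq; lia.
      * left. exists j, i; repeat split; lia.
Qed.

Lemma in_all_coords N l c : In c (all_coords N l) <-> coord_ok N l c.
Proof.
  change (None = c \/ In c (jet_coords (S N) l) <-> coord_ok N l c). rewrite in_jet_coords.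
  destruct c as [[j i]|]; simpl; split; auto.
  - intros [H|(j' & i' & E & H1 & H2)]; [congruence|inversion E; subst; split; lia].
  - intros [H1 H2]. right. exists j, i; repeat split; lia.
Qed.

Lemma NoDup_all_coords N l : NoDup (all_coords N l).
Proof.
  constructor.
  - intros H. apply in_jet_coords in H. destruct H as (j & i & E & _); discriminate.
  - generalize (S N). induction n; simpl; [constructor|].
    apply NoDup_app; auto.
    + apply NoDup_map_NoDup_ForallPairs; [|apply seq_NoDup]. intros x y _ _ H; congruence.
    + intros a Ha Hb. apply in_jet_coords in Ha. destruct Ha as (j & i & -> & H1 & _).
      apply in_map_iff in Hb. destruct Hb as (i' & E & _). inversion E; lia.
Qed.

Lemma sum_list_app l1 l2 f : sum_list (l1 ++ l2) f = sum_list l1 f + sum_list l2 f.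
Proof. induction l1; simpl; [ring|rewrite IHl1; ring]. Qed.

Lemma sum_list_all_coords N l f :
  sum_list (all_coords N l) f = f None + fsum (S N) (fun j => fsum l (fun i => f (Some (j, i)))).
Proof.
  change (f None + sum_list (jet_coords (S N) l) f =
          f None + fsum (S N) (fun j => fsum l (fun i => f (Some (j, i))))).
  f_equal. generalize (S N). induction n; simpl; auto.
  rewrite sum_list_app, IHn. f_equal. clear IHn.
  induction l; auto. rewrite seq_S, map_app, sum_list_app, IHl. simpl. ring.
Qed.

Lemma chain_rule N l F (ga : R -> jet) (ta : R -> R) s0 (g' : coord -> R) :
  cont_jet N l F -> has_partials N l F -> (forall c, coord_ok N l c -> cont_jet N l (pd F c)) ->
  (forall c, coord_ok N l c -> derivable_pt_lim (fun s => coord_val (ga s) (ta s) c) s0 (g' c)) ->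
  derivable_pt_lim (fun s => F (ga s) (ta s)) s0
    (pd F None (ga s0) (ta s0) * g' None +
     fsum (S N) (fun j => fsum l (fun i => pd F (Some (j, i)) (ga s0) (ta s0) * g' (Some (j, i))))).
Proof.
  intros HF HFp HFc Hd.
  rewrite <- (sum_list_all_coords N l (fun c => pd F c (ga s0) (ta s0) * g' c)).
  apply (chain_rule_list N l); auto.
  - intros c Hc; apply in_all_coords; auto.
  - apply NoDup_all_coords.
  - intros c Hc; apply Hd, in_all_coords; auto.
  - intros c Hc Hn. exfalso; apply Hn, in_all_coords; auto.
Qed.

Definition dtime (v : coord) : R := match v with None => 1 | Some _ => 0 end.

Lemma partial_lim_comp N l1 F G v p t :
  cont_jet N l1 F -> has_partials N l1 F -> (forall c, coord_ok N l1 c -> cont_jet N l1 (pd F c)) ->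
  (forall j i, (j <= N)%nat -> (i < l1)%nat -> forall p t, exists d, partial_lim (jet_coord G j i) v p t d) ->
  partial_lim (comp F G) v p t
    (pd F None (G p t) t * dtime v +
     fsum (S N) (fun j => fsum l1 (fun i => pd F (Some (j, i)) (G p t) t * pd (jet_coord G j i) v p t))).
Proof.
  intros HF HFp HFc HG. apply partial_limE. unfold comp.
  pose proof (chain_rule N l1 F (fun y => G (jet_set p v y) (time_set t v y)) (fun y => time_set t v y)
     (coord_val p t v) (fun c => match c with None => dtime v | Some (j, i) => pd (jet_coord G j i) v p t end)
     HF HFp HFc) as H.
  cbv beta in H. rewrite (jet_set_val p t v), (time_set_val p t v) in H. apply H.
  intros [[j i]|] Hc; simpl.
  - simpl in Hc. destruct (HG j i (proj1 Hc) (proj2 Hc) p t) as [d Hd].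
    rewrite (pd_eq_lim _ _ _ _ _ Hd). apply partial_limE in Hd. exact Hd.
  - destruct v as [[j i]|]; simpl; [apply derivable_pt_lim_const|apply derivable_pt_lim_id].
Qed.

Lemma pd_comp N l1 F G v p t : smooth N l1 F ->
  (forall j i, (j <= N)%nat -> (i < l1)%nat -> forall p t, exists d, partial_lim (jet_coord G j i) v p t d) ->
  pd (comp F G) v p t =
    pd F None (G p t) t * dtime v +
    fsum (S N) (fun j => fsum l1 (fun i => pd F (Some (j, i)) (G p t) t * pd (jet_coord G j i) v p t)).
Proof.
  intros HF HG. apply pd_eq_lim, partial_lim_comp; auto.
  - apply smooth_cont; auto.
  - apply smooth_has_partials; auto.
  - intros c Hc. apply smooth_cont, smooth_pd; auto.
Qed.

Lemma Ck_comp k : forall N l1 M l2 F G, Ck k N l1 F ->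
  (forall j i, (j <= N)%nat -> (i < l1)%nat -> Ck k M l2 (jet_coord G j i)) -> Ck k M l2 (comp F G).
Proof.
  induction k; intros N l1 M l2 F G HF HG; [apply (cont_jet_comp N l1); auto|].
  destruct (Ck_S_inv _ _ _ _ HF) as (HFc & HFp & HFk).
  assert (HGc : forall j i, (j <= N)%nat -> (i < l1)%nat -> cont_jet M l2 (jet_coord G j i))
    by (intros; apply (Ck_cont (S k)); auto).
  assert (HGk : forall j i, (j <= N)%nat -> (i < l1)%nat -> Ck k M l2 (jet_coord G j i))
    by (intros; apply Ck_pred; auto).
  split; [apply (cont_jet_comp N l1); auto|]. intros v Hv.
  assert (HGp : forall j i, (j <= N)%nat -> (i < l1)%nat -> forall p t,
             exists d, partial_lim (jet_coord G j i) v p t d)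
    by (intros j i Hj Hi; apply (Ck_S_inv _ _ _ _ (HG j i Hj Hi)); auto).
  assert (HFc' : forall c, coord_ok N l1 c -> cont_jet N l1 (pd F c))
    by (intros c Hc; apply (Ck_cont k); auto).
  split; [intros p t; eexists; apply (partial_lim_comp N l1); auto|].
  replace (pd (comp F G) v) with (fun p t =>
      comp (pd F None) G p t * dtime v +
      fsum (S N) (fun j => fsum l1 (fun i => comp (pd F (Some (j, i))) G p t * pd (jet_coord G j i) v p t)))
    by (extensionality p; extensionality t; symmetry; apply pd_eq_lim, (partial_lim_comp N l1); auto).
  apply (Ck_plus k M l2 (fun p t => comp (pd F None) G p t * dtime v)).
  - apply (Ck_mult k M l2 (comp (pd F None) G) (fun _ _ => dtime v)); [|apply Ck_const].
    apply (IHk N l1); auto. apply HFk; simpl; auto.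
  - apply Ck_fsum. intros j Hj. apply Ck_fsum. intros i Hi.
    apply (Ck_mult k M l2 (comp (pd F (Some (j, i))) G) (pd (jet_coord G j i) v)).
    + apply (IHk N l1); auto. apply HFk; simpl; split; lia.
    + apply (Ck_S_inv _ _ _ _ (HG j i ltac:(lia) Hi)); auto.
Qed.

Lemma smooth_comp N l1 M l2 F G : smooth N l1 F ->
  (forall j i, (j <= N)%nat -> (i < l1)%nat -> smooth M l2 (jet_coord G j i)) -> smooth M l2 (comp F G).
Proof. intros HF HG k. apply (Ck_comp k N l1); auto. intros; apply HG; auto. Qed.

(** * The total time derivative *)

Lemma Dt_order N k l F : cont_jet N l F -> (N <= k)%nat -> forall p t, Dt l k F p t = Dt l N F p t.
Proof.
  intros HF Hk p t. induction Hk; auto. rewrite <- IHHk. unfold Dt.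
  change (fsum (S (S m)) ?f) with (fsum (S m) f + f (S m)). cbv beta.
  rewrite (fsum_zero l (fun i => pd F (Some (S m, i)) p t * p (S (S m)) i)); [ring|].
  intros i Hi. rewrite (pd_inactive N l F (S m) i HF); [ring|simpl; lia].
Qed.

Lemma smooth_Dt N l F : smooth N l F -> smooth (S N) l (Dt l N F).
Proof.
  intros H k. unfold Dt. apply Ck_plus.
  - apply Ck_order_S, smooth_pd; simpl; auto.
  - apply Ck_fsum. intros j Hj. apply Ck_fsum. intros i Hi. apply Ck_mult.
    + apply Ck_order_S, smooth_pd; auto. simpl; split; lia.
    + apply Ck_proj; lia.
Qed.

Lemma smooth_Dn l F j : smooth 0 l F -> smooth j l (Dn l j F).
Proof. induction j; simpl; auto. intros H. apply smooth_Dt; auto. Qed.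

Lemma Dt_ext l k F G p t : (forall p t, F p t = G p t) -> Dt l k F p t = Dt l k G p t.
Proof. intros H. replace F with G; auto. extensionality a; extensionality b; auto. Qed.

Lemma Dt_const k l c p t : Dt l k (fun _ _ => c) p t = 0.
Proof.
  unfold Dt. rewrite pd_const, fsum_zero; [ring|]. intros j _.
  apply fsum_zero. intros i _. rewrite pd_const. ring.
Qed.

Lemma Dt_plus k l F G p t : has_partials k l F -> has_partials k l G ->
  Dt l k (fun p t => F p t + G p t) p t = Dt l k F p t + Dt l k G p t.
Proof.
  intros HF HG. unfold Dt.
  rewrite pd_plus by (apply HF || apply HG; simpl; auto).
  rewrite (fsum_ext (S k) _ (fun j => fsum l (fun i => pd F (Some (j, i)) p t * p (S j) i) +
                                   fsum l (fun i => pd G (Some (j, i)) p t * p (S j) i))).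
  { rewrite fsum_plus; ring. }
  intros j Hj. rewrite <- fsum_plus. apply fsum_ext. intros i Hi.
  rewrite pd_plus by (apply HF || apply HG; simpl; split; lia). ring.
Qed.

Lemma Dt_mult k l F G p t : has_partials k l F -> has_partials k l G ->
  Dt l k (fun p t => F p t * G p t) p t = Dt l k F p t * G p t + F p t * Dt l k G p t.
Proof.
  intros HF HG. unfold Dt.
  rewrite pd_mult by (apply HF || apply HG; simpl; auto).
  rewrite (fsum_ext (S k) _ (fun j => fsum l (fun i => pd F (Some (j, i)) p t * p (S j) i) * G p t +
                                   F p t * fsum l (fun i => pd G (Some (j, i)) p t * p (S j) i))).
  { rewrite fsum_plus, fsum_mult_l, fsum_mult_r; ring. }
  intros j Hj. rewrite <- fsum_mult_l, <- fsum_mult_r, <- fsum_plus. apply fsum_ext. intros i Hi.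
  rewrite pd_mult by (apply HF || apply HG; simpl; split; lia). ring.
Qed.

Lemma Dt_fsum k l n (f : nat -> jet -> R -> R) p t :
  (forall m, (m < n)%nat -> has_partials k l (f m)) ->
  Dt l k (fun p t => fsum n (fun m => f m p t)) p t = fsum n (fun m => Dt l k (f m) p t).
Proof.
  induction n; intros H; simpl; [apply Dt_const|].
  rewrite (Dt_plus k l (fun p t => fsum n (fun m => f m p t)) (f n)).
  - rewrite IHn; auto.
  - apply has_partials_fsum; auto.
  - apply H; lia.
Qed.

Lemma Dt_proj l j i p t : (i < l)%nat -> Dt l j (fun p _ => p j i) p t = p (S j) i.
Proof.
  intros Hi. unfold Dt.
  rewrite (pd_eq_lim _ _ _ _ _ (partial_lim_proj j i None p t)).
  rewrite (fsum_ext (S j) _ (fun j' => if Nat.eqb j' j then p (S j') i else 0)).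
  - rewrite fsum_delta by lia. ring.
  - intros j' Hj'.
    rewrite (fsum_ext l _ (fun i' => if Nat.eqb j' j then (if Nat.eqb i' i then p (S j') i' else 0) else 0)).
    + destruct (Nat.eqb j' j); [apply fsum_delta; auto|apply fsum_zero; auto].
    + intros i' Hi'. rewrite (pd_eq_lim _ _ _ _ _ (partial_lim_proj j i (Some (j', i')) p t)).
      rewrite (Nat.eqb_sym j j'), (Nat.eqb_sym i i').
      destruct (Nat.eqb j' j), (Nat.eqb i' i); simpl; ring.
Qed.

Lemma Dn_proj l i j p t : (i < l)%nat -> Dn l j (fun p _ => p O i) p t = p j i.
Proof.
  intros Hi. revert p t; induction j; intros p t; simpl; auto.
  rewrite (Dt_ext l j _ (fun p _ => p j i)); auto. apply Dt_proj; auto.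
Qed.

Lemma Dt_comp_regroup n m X0 (X Y0 x : nat -> nat -> R) (Y : nat -> nat -> nat -> nat -> R) :
  (X0 * 1 + fsum n (fun j => fsum m (fun i => X j i * Y0 j i))) +
  fsum n (fun k => fsum m (fun a => (X0 * 0 + fsum n (fun j => fsum m (fun i => X j i * Y j i k a))) * x k a))
  = X0 + fsum n (fun j => fsum m (fun i =>
           X j i * (Y0 j i + fsum n (fun k => fsum m (fun a => Y j i k a * x k a))))).
Proof.
  rewrite (fsum_ext n
    (fun j => fsum m (fun i => X j i * (Y0 j i + fsum n (fun k => fsum m (fun a => Y j i k a * x k a)))))
    (fun j => fsum m (fun i => X j i * Y0 j i) +
             fsum m (fun i => fsum n (fun k => fsum m (fun a => X j i * Y j i k a * x k a))))).
  2:{ intros j _. rewrite <- fsum_plus. apply fsum_ext; intros i _.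
      rewrite Rmult_plus_distr_l, <- fsum_mult_l. f_equal. apply fsum_ext; intros k _.
      rewrite <- fsum_mult_l. apply fsum_ext; intros a _. ring. }
  rewrite (fsum_ext n (fun k => fsum m (fun a => (X0 * 0 + _) * x k a))
             (fun k => fsum m (fun a => fsum n (fun j => fsum m (fun i => X j i * Y j i k a * x k a))))).
  2:{ intros k _. apply fsum_ext; intros a _. rewrite Rmult_0_r, Rplus_0_l, <- fsum_mult_r.
      apply fsum_ext; intros j _. rewrite <- fsum_mult_r. apply fsum_ext; intros i _. ring. }
  rewrite fsum_plus, (fsum_swap4 n m n m (fun k a j i => X j i * Y j i k a * x k a)). ring.
Qed.

Lemma Dt_comp N l F G p t : smooth N l F ->
  (forall j i, (j <= N)%nat -> (i < l)%nat -> smooth N l (jet_coord G j i)) ->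
  (forall j i, (j <= N)%nat -> (i < l)%nat -> forall p t, Dt l N (jet_coord G j i) p t = G p t (S j) i) ->
  Dt l N (comp F G) p t = comp (Dt l N F) G p t.
Proof.
  intros HF HG HD.
  assert (HPC : forall v, coord_ok N l v -> pd (comp F G) v p t =
     pd F None (G p t) t * dtime v +
     fsum (S N) (fun j => fsum l (fun i => pd F (Some (j, i)) (G p t) t * pd (jet_coord G j i) v p t))).
  { intros v Hv. apply pd_comp; auto. intros j i Hj Hi. apply (smooth_has_partials N l); auto. }
  unfold Dt at 1. rewrite HPC by (simpl; auto).
  rewrite (fsum_ext (S N) (fun k => fsum l (fun a => pd (comp F G) (Some (k, a)) p t * p (S k) a))
    (fun k => fsum l (fun a => (pd F None (G p t) t * dtime (Some (k, a)) +
     fsum (S N) (fun j => fsum l (fun i => pd F (Some (j, i)) (G p t) t *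
        pd (jet_coord G j i) (Some (k, a)) p t))) * p (S k) a))).
  2:{ intros k Hk. apply fsum_ext. intros a Ha. rewrite HPC; auto. simpl; split; lia. }
  unfold comp, Dt.
  rewrite (fsum_ext (S N) (fun j => fsum l (fun i => pd F (Some (j, i)) (G p t) t * G p t (S j) i))
     (fun j => fsum l (fun i => pd F (Some (j, i)) (G p t) t *
        (pd (jet_coord G j i) None p t +
         fsum (S N) (fun k => fsum l (fun a => pd (jet_coord G j i) (Some (k, a)) p t * p (S k) a)))))).
  2:{ intros j Hj. apply fsum_ext. intros i Hi. rewrite <- HD by lia. reflexivity. }
  apply (Dt_comp_regroup (S N) l _ (fun j i => pd F (Some (j, i)) (G p t) t)
     (fun j i => pd (jet_coord G j i) None p t) (fun k a => p (S k) a)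
     (fun j i k a => pd (jet_coord G j i) (Some (k, a)) p t)).
Qed.

(** * Symmetry of second partial derivatives *)

Module SecondPartials.
Import Coquelicot.Coquelicot.

Lemma Derive_coord G c p t y : (forall p t, exists d, partial_lim G c p t d) ->
  Derive (fun z => G (jet_set p c z) (time_set t c z)) y = pd G c (jet_set p c y) (time_set t c y).
Proof. intros H. apply is_derive_unique, is_derive_Reals, derivable_pt_lim_coord; auto. Qed.

Lemma ex_derive_coord G c p t y : (forall p t, exists d, partial_lim G c p t d) ->
  ex_derive (fun z => G (jet_set p c z) (time_set t c z)) y.
Proof. intros H. eexists. apply is_derive_Reals, derivable_pt_lim_coord; auto. Qed.

Lemma Derive_coord_swap G u v p t x y : u <> v -> (forall p t, exists d, partial_lim G u p t d) ->
  Derive (fun z => G (jet_set (jet_set p u z) v y) (time_set (time_set t u z) v y)) x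
    = pd G u (jet_set (jet_set p u x) v y) (time_set (time_set t u x) v y)
  /\ ex_derive (fun z => G (jet_set (jet_set p u z) v y) (time_set (time_set t u z) v y)) x.
Proof.
  intros Huv HG. rewrite (jet_set_comm p u v x y), (time_set_comm t u v x y) by auto.
  assert (E : forall z, G (jet_set (jet_set p u z) v y) (time_set (time_set t u z) v y)
                        = G (jet_set (jet_set p v y) u z) (time_set (time_set t v y) u z))
    by (intros z; rewrite jet_set_comm, time_set_comm by auto; reflexivity).
  split.
  - rewrite (functional_extensionality _ _ E). apply Derive_coord; auto.
  - apply (ex_derive_ext (fun z => G (jet_set (jet_set p v y) u z) (time_set (time_set t v y) u z))).
    + intros z. symmetry. apply E.
    + apply ex_derive_coord; auto.
Qed.

Lemma continuity_2d_pt_coords N l H p t u v x0 y0 : cont_jet N l H ->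
  continuity_2d_pt (fun a b => H (jet_set (jet_set p u a) v b) (time_set (time_set t u a) v b)) x0 y0.
Proof.
  intros HH eps.
  destruct (cont_jet_near N l H (jet_set (jet_set p u x0) v y0) (time_set (time_set t u x0) v y0) eps)
    as [d [Hd Hc]]; [auto|apply cond_pos|].
  exists (mkposreal d Hd). intros a b Ha Hb. simpl in Ha, Hb. apply Hc.
  intros c _. rewrite !coord_val_set.
  destruct (coord_eqb c v); auto; destruct (coord_eqb c u); auto; rewrite Rminus_diag, Rabs_R0; auto.
Qed.

(* Schwarz's theorem in the plane of the coordinates u and v through (p, t). *)
Lemma pd_comm N l F v u p t : smooth N l F -> coord_ok N l v -> coord_ok N l u -> u <> v ->
  pd (pd F v) u p t = pd (pd F u) v p t.
Proof.
  intros HF Hv Hu Huv.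
  assert (HFv := smooth_has_partials N l F HF v Hv).
  assert (HFu := smooth_has_partials N l F HF u Hu).
  assert (HFvu := smooth_has_partials N l _ (smooth_pd N l F v HF Hv) u Hu).
  assert (HFuv := smooth_has_partials N l _ (smooth_pd N l F u HF Hu) v Hv).
  set (f := fun x y => F (jet_set (jet_set p u x) v y) (time_set (time_set t u x) v y)).
  assert (E1 : forall y, (fun z => Derive (fun s => f z s) y) =
                        (fun z => pd F v (jet_set (jet_set p u z) v y) (time_set (time_set t u z) v y)))
    by (intros y; extensionality z; exact (Derive_coord F v (jet_set p u z) (time_set t u z) y HFv)).
  assert (E2 : forall x, (fun z => Derive (fun s => f s z) x) =
                        (fun z => pd F u (jet_set (jet_set p u x) v z) (time_set (time_set t u x) v z)))
    by (intros x; extensionality z; exact (proj1 (Derive_coord_swap F u v p t x z Huv HFu))).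
  assert (Hs := Schwarz f (coord_val p t u) (coord_val p t v)).
  rewrite E1, E2, (proj1 (Derive_coord_swap _ u v p t _ _ Huv HFvu)),
    (Derive_coord (pd F u) v (jet_set p u (coord_val p t u)) (time_set t u (coord_val p t u)) _ HFuv) in Hs.
  rewrite !jet_set_val, !time_set_val in Hs. apply Hs.
  - exists (mkposreal 1 Rlt_0_1). intros a b _ _. split; [|split; [|split]].
    + exact (proj2 (Derive_coord_swap F u v p t a b Huv HFu)).
    + exact (ex_derive_coord F v (jet_set p u a) (time_set t u a) b HFv).
    + rewrite E1. exact (proj2 (Derive_coord_swap _ u v p t a b Huv HFvu)).
    + rewrite E2. exact (ex_derive_coord (pd F u) v (jet_set p u a) (time_set t u a) b HFuv).
  - assert (E : (fun a b => Derive (fun z => Derive (fun s => f z s) b) a)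
                = (fun a b => pd (pd F v) u (jet_set (jet_set p u a) v b) (time_set (time_set t u a) v b)))
      by (extensionality a; extensionality b; rewrite E1;
          exact (proj1 (Derive_coord_swap _ u v p t a b Huv HFvu))).
    rewrite E. apply (continuity_2d_pt_coords N l), smooth_cont. apply smooth_pd; [apply smooth_pd|]; auto.
  - assert (E : (fun a b => Derive (fun z => Derive (fun s => f s z) a) b)
                = (fun a b => pd (pd F u) v (jet_set (jet_set p u a) v b) (time_set (time_set t u a) v b)))
      by (extensionality a; extensionality b; rewrite E2;
          exact (Derive_coord (pd F u) v (jet_set p u a) (time_set t u a) b HFuv)).
    rewrite E. apply (continuity_2d_pt_coords N l), smooth_cont. apply smooth_pd; [apply smooth_pd|]; auto.
Qed.

End SecondPartials.

Lemma pd_comm_jet N l F v k i p t : smooth N l F -> coord_ok N l v ->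
  pd (pd F v) (Some (k, i)) p t = pd (pd F (Some (k, i))) v p t.
Proof.
  intros HF Hv. destruct (classic (Some (k, i) = v)) as [<-|E]; auto.
  destruct (classic (coord_ok N l (Some (k, i)))) as [Hu|Hu].
  - apply (SecondPartials.pd_comm N l); auto.
  - rewrite (pd_inactive N l (pd F v) k i), (pd_inactive N l F k i), pd_const; auto.
    + apply smooth_cont; auto.
    + apply smooth_cont, smooth_pd; auto.
Qed.

(** * Commuting partial and total derivatives *)

Lemma has_partials_Dt_term N l F j i : smooth N l F -> (j <= N)%nat -> (i < l)%nat ->
  has_partials (S N) l (fun p t => pd F (Some (j, i)) p t * p (S j) i).
Proof.
  intros HF Hj Hi. apply has_partials_mult.
  - apply (smooth_has_partials_any N), smooth_pd; simpl; auto.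
  - intros c _ p t. eexists; apply partial_lim_proj.
Qed.

Lemma pd_Dt_term N l F j i' k i p t : smooth N l F -> (j <= N)%nat -> (i' < l)%nat ->
  pd (fun p t => pd F (Some (j, i')) p t * p (S j) i') (Some (k, i)) p t =
  pd (pd F (Some (k, i))) (Some (j, i')) p t * p (S j) i' +
  (if (Nat.eqb (S j) k && Nat.eqb i' i)%bool then pd F (Some (j, i')) p t else 0).
Proof.
  intros HF Hj Hi'. rewrite pd_mult.
  - rewrite (pd_eq_lim _ _ _ _ _ (partial_lim_proj (S j) i' (Some (k, i)) p t)).
    rewrite (pd_comm_jet N l) by (auto; simpl; auto).
    destruct (Nat.eqb (S j) k && Nat.eqb i' i)%bool; ring.
  - apply (smooth_partial_ex N l), smooth_pd; simpl; auto.
  - eexists; apply partial_lim_proj.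
Qed.

Lemma pd_Dt N l F k i p t : smooth N l F -> (k <= S N)%nat -> (i < l)%nat ->
  pd (Dt l N F) (Some (k, i)) p t =
  Dt l N (pd F (Some (k, i))) p t + match k with O => 0 | S k' => pd F (Some (k', i)) p t end.
Proof.
  intros HF Hk Hi.
  assert (Hterm : forall j, (j < S N)%nat -> has_partials (S N) l
            (fun p t => fsum l (fun i' => pd F (Some (j, i')) p t * p (S j) i'))).
  { intros j Hj. apply has_partials_fsum. intros i' Hi'. apply has_partials_Dt_term; auto; lia. }
  unfold Dt at 1. rewrite pd_plus.
  2:{ apply (smooth_partial_ex N l), smooth_pd; simpl; auto. }
  2:{ apply (has_partials_fsum (S N) l (S N)); simpl; auto. }
  rewrite (pd_fsum (S N) l (S N)) by (simpl; auto).
  rewrite (fsum_ext (S N) _ (fun j =>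
      fsum l (fun i' => pd (pd F (Some (k, i))) (Some (j, i')) p t * p (S j) i') +
      (if Nat.eqb (S j) k then pd F (Some (j, i)) p t else 0))).
  2:{ intros j Hj.
      rewrite (pd_fsum (S N) l l); [|intros; apply has_partials_Dt_term; auto; lia|simpl; auto].
      rewrite (fsum_ext l _ _ (fun i' _ => pd_Dt_term N l F j i' k i p t HF ltac:(lia) ltac:(auto))).
      rewrite fsum_plus. f_equal.
      destruct (Nat.eqb (S j) k); simpl.
      - apply fsum_delta; auto.
      - apply fsum_zero; auto. }
  rewrite fsum_plus. unfold Dt. rewrite (pd_comm_jet N l) by (auto; simpl; auto).
  destruct k as [|k'].
  - rewrite (fsum_zero (S N) (fun j => if Nat.eqb (S j) 0 then _ else 0)) by auto. ring.
  - rewrite (fsum_ext (S N) (fun j => if Nat.eqb (S j) (S k') then pd F (Some (j, i)) p t else 0)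
              (fun j => if Nat.eqb j k' then pd F (Some (j, i)) p t else 0)) by reflexivity.
    rewrite fsum_delta by lia. ring.
Qed.

(** * Prolongations of coordinate changes *)

Section Prolongation.

Variable l : nat.
Variable f : (nat -> R) -> R -> nat -> R.
Hypothesis smooth_f : forall a, (a < l)%nat -> smooth 0 l (comp0 f a).

Let W := prolong l f.

Lemma smooth_prolong j a N : (j <= N)%nat -> (a < l)%nat -> smooth N l (jet_coord W j a).
Proof.
  intros Hj Ha k. apply (Ck_order_le k j); auto.
  change (jet_coord W j a) with (Dn l j (comp0 f a)). apply smooth_Dn; auto.
Qed.

Lemma Dt_prolong j a N p t : (j <= N)%nat -> (a < l)%nat ->
  Dt l N (jet_coord W j a) p t = W p t (S j) a.
Proof.
  intros Hj Ha. change (jet_coord W j a) with (Dn l j (comp0 f a)).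
  rewrite (Dt_order j N l); auto. apply smooth_cont, smooth_Dn; auto.
Qed.

Lemma Dt_comp_prolong N F p t : smooth N l F -> Dt l N (comp F W) p t = comp (Dt l N F) W p t.
Proof.
  intros HF. apply Dt_comp; auto.
  - intros; apply smooth_prolong; auto.
  - intros; apply Dt_prolong; auto.
Qed.

Lemma Dn_comp_prolong F j p t : smooth 0 l F -> Dn l j (comp F W) p t = comp (Dn l j F) W p t.
Proof.
  intros HF. revert p t; induction j; intros p t; simpl; auto.
  rewrite (Dt_ext l j _ (comp (Dn l j F) W)) by auto.
  apply Dt_comp_prolong, smooth_Dn; auto.
Qed.

(* The "cancellation of dots" of Lagrangian mechanics, at every order. *)
Lemma pd_prolong_diag a i k p t : (a < l)%nat -> (i < l)%nat ->
  pd (jet_coord W k a) (Some (k, i)) p t = Jac f (p O) t a i.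
Proof.
  intros Ha Hi. change (jet_coord W k a) with (Dn l k (comp0 f a)). revert p t.
  induction k; intros p t; [reflexivity|].
  assert (HD := smooth_Dn l _ k (smooth_f a Ha)).
  simpl. rewrite (pd_Dt k l), (pd_inactive k l (Dn l k (comp0 f a)) (S k) i), Dt_const, IHk;
    auto; [ring|apply smooth_cont; auto|simpl; lia].
Qed.

Lemma pd_prolong_subdiag a i k p t : (a < l)%nat -> (i < l)%nat ->
  pd (jet_coord W (S k) a) (Some (k, i)) p t = INR (S k) * Dt l 0 (fun p t => Jac f (p O) t a i) p t.
Proof.
  intros Ha Hi. change (jet_coord W (S k) a) with (Dt l k (Dn l k (comp0 f a))). revert p t.
  assert (HJ : smooth 0 l (fun p t => Jac f (p O) t a i)).
  { change (smooth 0 l (pd (comp0 f a) (Some (O, i)))). apply smooth_pd; simpl; auto. }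
  induction k; intros p t; simpl Dn.
  - rewrite (pd_Dt 0 l) by auto. change (INR 1) with 1. rewrite Rmult_1_l, Rplus_0_r. reflexivity.
  - rewrite (pd_Dt (S k) l), IHk by (try apply smooth_Dt, smooth_Dn; auto).
    rewrite (Dt_ext l (S k) _ (fun p t => Jac f (p O) t a i))
      by (intros; apply (pd_prolong_diag a i (S k)); auto).
    rewrite (Dt_order 0 (S k) l) by (try apply smooth_cont; auto; lia).
    rewrite (S_INR (S k)). ring.
Qed.

Lemma pd_prolong_lower j a k i p t : (j < k)%nat -> (a < l)%nat ->
  pd (jet_coord W j a) (Some (k, i)) p t = 0.
Proof.
  intros Hjk Ha. rewrite (pd_inactive j l); auto.
  - apply smooth_cont, smooth_prolong; auto.
  - simpl; lia.
Qed.

Variable r : nat.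
Variable F : jet -> R -> R.
Hypothesis smooth_F : smooth (S r) l F.

Lemma pd_comp_prolong k i p t :
  pd (comp F W) (Some (k, i)) p t =
  fsum (S (S r)) (fun j => fsum l (fun a =>
    pd F (Some (j, a)) (W p t) t * pd (jet_coord W j a) (Some (k, i)) p t)).
Proof.
  rewrite (pd_comp (S r) l); auto.
  - simpl dtime. ring.
  - intros j a Hj Ha p' t'. apply (smooth_partial_ex j l), smooth_prolong; auto.
Qed.

Lemma pd_comp_prolong_top i p t : (i < l)%nat ->
  pd (comp F W) (Some (S r, i)) p t = fsum l (fun a => pd F (Some (S r, a)) (W p t) t * Jac f (p O) t a i).
Proof.
  intros Hi. rewrite pd_comp_prolong. change (fsum (S (S r)) ?g) with (fsum (S r) g + g (S r)).
  rewrite fsum_zero, Rplus_0_l.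
  - apply fsum_ext. intros a Ha. rewrite pd_prolong_diag; auto.
  - intros j Hj. apply fsum_zero. intros a Ha. rewrite pd_prolong_lower; auto. ring.
Qed.

Lemma pd_comp_prolong_sub i p t : (i < l)%nat ->
  pd (comp F W) (Some (r, i)) p t =
  fsum l (fun a => pd F (Some (r, a)) (W p t) t * Jac f (p O) t a i +
                   pd F (Some (S r, a)) (W p t) t * (INR (S r) * Dt l 0 (fun p t => Jac f (p O) t a i) p t)).
Proof.
  intros Hi. rewrite pd_comp_prolong. change (fsum (S (S r)) ?g) with (fsum r g + g r + g (S r)).
  rewrite fsum_zero, Rplus_0_l, <- fsum_plus.
  - apply fsum_ext. intros a Ha. rewrite pd_prolong_diag, pd_prolong_subdiag; auto.
  - intros j Hj. apply fsum_zero. intros a Ha. rewrite pd_prolong_lower; auto. ring.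
Qed.

Lemma Dt_pd_comp_prolong_top i p t : (i < l)%nat ->
  Dt l (S r) (pd (comp F W) (Some (S r, i))) p t =
  fsum l (fun a => Dt l (S r) (pd F (Some (S r, a))) (W p t) t * Jac f (p O) t a i +
                   pd F (Some (S r, a)) (W p t) t * Dt l 0 (fun p t => Jac f (p O) t a i) p t).
Proof.
  intros Hi. rewrite (Dt_ext l (S r) _ _ p t (fun p t => pd_comp_prolong_top i p t Hi)).
  assert (HF' : forall a, (a < l)%nat -> smooth (S r) l (comp (pd F (Some (S r, a))) W)).
  { intros a Ha. apply (smooth_comp (S r) l); [apply smooth_pd; simpl; auto|].
    intros; apply smooth_prolong; auto. }
  assert (HJ : forall a, (a < l)%nat -> smooth 0 l (fun p t => Jac f (p O) t a i)).
  { intros a Ha. change (smooth 0 l (pd (comp0 f a) (Some (O, i)))). apply smooth_pd; simpl; auto. }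
  assert (HP : forall a, (a < l)%nat ->
     has_partials (S r) l (comp (pd F (Some (S r, a))) W) /\
     has_partials (S r) l (fun p t => Jac f (p O) t a i)).
  { intros a Ha. split; [apply (smooth_has_partials_any (S r))|apply (smooth_has_partials_any O)]; auto. }
  rewrite (Dt_fsum (S r) l l).
  - apply fsum_ext. intros a Ha.
    rewrite (Dt_mult (S r) l (comp (pd F (Some (S r, a))) W)) by apply HP, Ha.
    rewrite Dt_comp_prolong by (apply smooth_pd; simpl; auto).
    rewrite (Dt_order 0 (S r) l); [reflexivity|apply smooth_cont; auto|lia].
  - intros a Ha. apply has_partials_mult; apply HP, Ha.
Qed.

Lemma Oop_comp_prolong i p t : (i < l)%nat ->
  Oop l r (comp F W) p t i = fsum l (fun a => Jac f (p O) t a i * Oop l r F (W p t) t a).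
Proof.
  intros Hi. unfold Oop.
  rewrite pd_comp_prolong_sub, Dt_pd_comp_prolong_top, fsum_minus_mult_l by auto.
  apply fsum_ext. intros a Ha. unfold comp. ring.
Qed.

End Prolongation.

Lemma prolong_left_inverse l Qbar Q p t j i :
  (forall a, (a < l)%nat -> smooth O l (comp0 Qbar a)) ->
  (forall a, (a < l)%nat -> smooth O l (comp0 Q a)) ->
  (forall x t a, (a < l)%nat -> Q (Qbar x t) t a = x a) ->
  (i < l)%nat -> prolong l Q (prolong l Qbar p t) t j i = p j i.
Proof.
  intros HQbar HQ Hinv Hi.
  change (prolong l Q (prolong l Qbar p t) t j i) with (comp (Dn l j (comp0 Q i)) (prolong l Qbar) p t).
  rewrite <- Dn_comp_prolong by auto.
  assert (E : comp (comp0 Q i) (prolong l Qbar) = fun p _ => p O i)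
    by (extensionality p'; extensionality t'; apply Hinv; auto).
  rewrite E. apply Dn_proj; auto.
Qed.

Theorem proposition1p1 (l r : nat) (Y : jet -> R -> R)
  (Qbar Q : (nat -> R) -> R -> nat -> R)
  (HY : smooth (S r) l Y)
  (HQbar : forall i, (i < l)%nat -> smooth O l (comp0 Qbar i))
  (HQ : forall i, (i < l)%nat -> smooth O l (comp0 Q i))
  (Hinv1 : forall x t i, (i < l)%nat -> Q (Qbar x t) t i = x i)
  (Hinv2 : forall y t i, (i < l)%nat -> Qbar (Q y t) t i = y i)
  (Hdet : forall x t, det l (Jac Qbar x t) <> 0) :
  let Ytilde := fun w t => Y (prolong l Q w t) t in
  forall (p : jet) (t : R) (i : nat), (i < l)%nat ->
    Oop l r Y p t i =
    fsum l (fun a => Jac Qbar (p O) t a i * Oop l r Ytilde (prolong l Qbar p t) t a).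
Proof.
  intros Ytilde p t i Hi.
  assert (HYtilde : smooth (S r) l Ytilde).
  { apply (smooth_comp (S r) l (S r) l Y (prolong l Q)); auto. intros; apply smooth_prolong; auto. }
  assert (EY : Y = comp Ytilde (prolong l Qbar)).
  { extensionality p'; extensionality t'.
    change (Y p' t' = Y (prolong l Q (prolong l Qbar p' t') t') t'). symmetry.
    apply (cont_jet_eq (S r) l); [apply smooth_cont; auto|].
    intros j a _ Ha. apply prolong_left_inverse; auto. }
  rewrite EY. apply Oop_comp_prolong; auto.
Qed.
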